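(* Let $\rho$ be a $(0,\infty)$-valued random variable with $\mathbb E\rho=1$, let $K\in(0,\infty)$, and $g(x)=\mathbb E\big[\frac{K\rho+x}{1+(K\rho+x)}\big]$, $x\in[0,\infty)$. Then $g$ has a unique fixed point $M\in(0,1)$, and $g$ is a strict contraction around $M$: there is $\beta\in(0,1)$ with $0\le\frac{g(x)-M}{x-M}\le\beta$ for all $x\in[0,\infty)\setminus\{M\}$ (one may take $\beta=1-g(0)/M$). *)

From HB Require Import structures.
From mathcomp Require Import all_boot all_order all_algebra.
From mathcomp Require Import all_classical all_reals all_analysis.
Set Implicit Arguments. Unset Strict Implicit. Unset Printing Implicit Defensive.
Import Order.TTheory GRing.Theory Num.Theory.
Local Open Scope ring_scope.

Definition gfun (d : measure_display) (T : measurableType d) (R : realType)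
  (P : probability T R) (rho : T -> R) (K x : R) : R :=
  Rintegral P setT (fun t => (K * rho t + x) / (1 + (K * rho t + x))).

From HB Require Import structures.
From mathcomp Require Import all_boot all_order all_algebra.
From mathcomp Require Import all_classical all_reals all_analysis.
From mathcomp Require Import measurable_realfun ring lra.
Import Order.TTheory GRing.Theory Num.Theory.
Import numFieldNormedType.Exports.
Local Open Scope ring_scope.

(* With a := K rho > 0 and w_x := 1 / (1 + a + x), one has g(x) = 1 - E[w_x]
   and, pointwise, w_x - w_y = (y - x) w_x w_y.  Hence g(x) - g(y) = (x - y) s(x, y)
   with s(x, y) := E[w_x w_y] in (0, 1), decreasing in x.  So x |-> g(x) - x is
   strictly decreasing and continuous, positive at 0 and negative at 1, which gives
   the unique fixed point M; the secant slope of g at M is s(x, M) <= s(0, M), and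
   s(0, M) = 1 - g(0)/M by the same identity at x = 0. *)

Lemma lipschitz1_continuous (R : realType) (f : R -> R) :
  (forall x y, `|f x - f y| <= `|x - y|) -> continuous f.
Proof.
move=> f_lip x; apply/cvgrPdist_le => e e0.
have near_x : \forall t \near x, `|x - t| <= e := cvgr_dist_le id x cvg_id e e0.
near=> t; apply: le_trans (f_lip _ _) _; near: t; exact: near_x.
Unshelve. all: by end_near.
Qed.

Section SecantContraction.
Variables (R : realType) (g : R -> R) (s : R -> R -> R).
Hypothesis gB : forall {x y}, 0 <= x -> 0 <= y -> g x - g y = (x - y) * s x y.
Hypothesis s_gt0 : forall {x y}, 0 <= x -> 0 <= y -> 0 < s x y.
Hypothesis s_lt1 : forall {x y}, 0 <= x -> 0 <= y -> s x y < 1.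
Hypothesis s_le_s0 : forall {x y}, 0 <= x -> 0 <= y -> s x y <= s 0 y.
Hypothesis g0_gt0 : 0 < g 0.
Hypothesis g_lt1 : forall x, 0 <= x -> g x < 1.

(* Folding by the norm makes the 1-Lipschitz bound on [0, +oo) global. *)
Lemma continuous_g_norm : continuous (fun x : R => g `|x|).
Proof.
apply: lipschitz1_continuous => x y; rewrite gB // normrM.
have s0 := s_gt0 (normr_ge0 x) (normr_ge0 y).
have s1 := s_lt1 (normr_ge0 x) (normr_ge0 y).
rewrite (gtr0_norm s0) -[leRHS]mulr1.
by apply: ler_pM => //; [exact: ltW | exact: ler_dist_dist | exact: ltW].
Qed.

Lemma exists_fixpoint : exists2 M, 0 < M < 1 & g M = M.
Proof.
pose f x := g `|x| - x.
have f0 : 0 < f 0 by rewrite /f normr0 subr0.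
have f1 : f 1 < 0 by rewrite /f normr1 subr_lt0 g_lt1.
have [M] : exists2 M, M \in `[0, 1] & f M = 0.
  apply: IVT; first exact: ler01.
    apply: continuous_subspaceT => x.
    exact: continuousB (continuous_g_norm x) cvg_id.
  by rewrite ge_min le_max (ltW f1) (ltW f0) orbT.
rewrite in_itv /= => /andP[M0 M1] fM.
exists M; last by move/eqP: fM; rewrite /f ger0_norm // subr_eq0 => /eqP.
rewrite !lt_neqAle M0 M1 !andbT; apply/andP; split.
  by apply/eqP => M_eq; move: f0; rewrite [in f 0]M_eq fM ltxx.
by apply/eqP => M_eq; move: f1; rewrite -M_eq fM ltxx.
Qed.

Lemma fixpoint_unique {M y} : 0 <= M -> 0 <= y -> g M = M -> g y = y -> y = M.
Proof.
move=> M0 y0 gM gy; have := gB y0 M0; rewrite gM gy => /eqP.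
rewrite -subr_eq0 -{1}[y - M]mulr1 -mulrBr mulf_eq0 subr_eq0 => /orP[/eqP //|].
by rewrite subr_eq0 => /eqP s1; have := s_lt1 y0 M0; rewrite -s1 ltxx.
Qed.

Lemma secant_at_fixpoint M x : 0 <= M -> 0 <= x -> g M = M -> x != M ->
  (g x - M) / (x - M) = s x M.
Proof.
by move=> M0 x0 gM xM; rewrite -{1}gM gB // mulrC mulKf // subr_eq0.
Qed.

Lemma secant_at_zero M : 0 < M -> g M = M -> 1 - g 0 / M = s 0 M.
Proof.
move=> M0 gM; have := gB (lexx 0) (ltW M0); rewrite gM => g0E.
have -> : g 0 = M * (1 - s 0 M) by rewrite -[g 0](subrK M) g0E; ring.
by field; rewrite gt_eqF.
Qed.

Lemma secant_contraction : exists M : R,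
  [/\ 0 < M < 1, g M = M,
      (forall y : R, 0 <= y -> g y = y -> y = M) &
      let beta := 1 - g 0 / M in
      0 < beta < 1 /\
      forall x : R, 0 <= x -> x != M -> 0 <= (g x - M) / (x - M) <= beta].
Proof.
have [M M01 gM] := exists_fixpoint; have /andP[M_gt0 _] := M01.
have M_ge0 := ltW M_gt0.
exists M; split => //.
- by move=> y y0 gy; exact: fixpoint_unique M_ge0 y0 gM gy.
- rewrite /= secant_at_zero //; split; first by rewrite s_gt0 // s_lt1.
  move=> x x0 xM; rewrite secant_at_fixpoint //.
  by rewrite ltW ?s_gt0 ?s_le_s0.
Qed.

End SecantContraction.

Section ProbabilityIntegral.
Context {d : measure_display} {T : measurableType d} {R : realType}
  (P : probability T R).

Lemma integrable_normr_le1 (f : T -> R) : measurable_fun setT f ->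
  (forall t, `|f t| <= 1) -> P.-integrable setT (EFin \o f).
Proof.
move=> mf f_le1; apply/integrableP; split; first exact/measurable_EFinP.
apply: (@le_lt_trans _ _ (1%:E * P setT)%E); last first.
  by rewrite probability_setT mule1 ltry.
apply: (integral_le_bound 1%:E) => //; first exact/measurable_EFinP.
by apply: aeW => t _ /=; rewrite lee_fin f_le1.
Qed.

Lemma Rintegral_gt0 (f : T -> R) : P.-integrable setT (EFin \o f) ->
  (forall t, 0 < f t) -> 0 < Rintegral P setT f.
Proof.
move=> fi f_gt0; have mf := measurable_int P fi.
rewrite lt_neqAle Rintegral_ge0 => [|t _]; last exact: ltW.
rewrite andbT; apply/eqP => int_f0.
have int_absf0 : (\int[P]_(t in setT) `|(f t)%:E|)%E = 0%E.
  transitivity (\int[P]_(t in setT) (f t)%:E)%E.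
    by apply: eq_integral => t _; rewrite gee0_abs // lee_fin ltW.
  rewrite -(fineK (integrable_fin_num measurableT fi)).
  by move: int_f0; rewrite /Rintegral => <-.
have f_ae0 := (ae_eq_integral_abs P measurableT mf).1 int_absf0.
(* An a.e. property of a probability holds at some point. *)
have : ProperFilter (almost_everywhere P).
  by apply: ae_properfilter_algebraOfSetsType; rewrite /= probability_setT lte01.
move=> ae_proper; have [t /(_ I)[] /eqP] := @filter_ex _ _ ae_proper _ f_ae0.
by rewrite gt_eqF.
Qed.

Lemma Rintegral_one : Rintegral P setT (fun=> 1 : R) = 1.
Proof. by rewrite Rintegral_cst // /= probability_setT mul1r. Qed.

Lemma integrable_one : P.-integrable setT (EFin \o (fun=> 1 : R)).
Proof. by apply: integrable_normr_le1 => // t; rewrite normr1. Qed.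

Lemma Rintegral_lt1 (f : T -> R) : P.-integrable setT (EFin \o f) ->
  (forall t, f t < 1) -> Rintegral P setT f < 1.
Proof.
move=> fi f_lt1; rewrite -subr_gt0 -[X in X - _]Rintegral_one.
rewrite -RintegralB //; last exact: integrable_one.
apply: Rintegral_gt0 => [|t]; last by rewrite subr_gt0.
exact: (integrableB measurableT integrable_one fi).
Qed.

End ProbabilityIntegral.

Definition inv1p_norm {R : realType} (u : R) : R := (1 + `|u|)^-1.

Lemma continuous_inv1p_norm (R : realType) : continuous (@inv1p_norm R).
Proof.
move=> u; apply: (@continuousV _ _ (fun v : R => 1 + `|v|)).
  by rewrite gt_eqF // ltr_wpDr.
exact: continuousD (cvg_cst _) (@norm_continuous _ R^o u).
Qed.

Section ShiftedReciprocal.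
Context {d : measure_display} {T : measurableType d} {R : realType}
  (P : probability T R) (rho : T -> R) (K : R).
Hypothesis rho_meas : measurable_fun setT rho.
Hypothesis rho_pos : forall t, 0 < rho t.
Hypothesis K_pos : 0 < K.

(* The norm only makes [weight x] continuous in the shift, hence measurable;
   for [0 <= x] it is [1 / (1 + K rho + x)], see [weightE]. *)
Definition weight (x : R) (t : T) : R := inv1p_norm (K * rho t + x).

Definition slope (x y : R) : R :=
  Rintegral P setT (fun t => weight x t * weight y t).

Lemma measurable_weight x : measurable_fun setT (weight x).
Proof.
apply: measurableT_comp; first exact: continuous_measurable_fun (@continuous_inv1p_norm R).
by apply: measurable_funD => //; exact: measurable_funM.
Qed.

Lemma shift_gt0 x t : 0 <= x -> 0 < K * rho t + x.
Proof. by move=> x0; rewrite ltr_wpDr // mulr_gt0. Qed.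

Lemma weightE x t : 0 <= x -> weight x t = (1 + (K * rho t + x))^-1.
Proof. by move=> x0; rewrite /weight /inv1p_norm gtr0_norm ?shift_gt0. Qed.

Lemma weight_gt0 x t : 0 <= x -> 0 < weight x t.
Proof. by move=> x0; rewrite weightE // invr_gt0 ltr_wpDr ?ltW ?shift_gt0. Qed.

Lemma weight_lt1 x t : 0 <= x -> weight x t < 1.
Proof.
by move=> x0; have a_gt0 := shift_gt0 x t x0; rewrite weightE // invf_lt1; lra.
Qed.

Lemma weight_le_weight0 x t : 0 <= x -> weight x t <= weight 0 t.
Proof.
move=> x0; have := shift_gt0 0 t (lexx 0); rewrite addr0 => a_gt0.
by rewrite !weightE // addr0 lef_pV2 ?posrE ?lerD2l ?lerDl //; lra.
Qed.

Lemma weightB x y t : 0 <= x -> 0 <= y ->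
  weight x t - weight y t = (y - x) * (weight x t * weight y t).
Proof.
move=> x0 y0; have := shift_gt0 x t x0; have := shift_gt0 y t y0.
rewrite !weightE // => ay ax; field.
by rewrite !gt_eqF // ltr_wpDl // ltW.
Qed.

Lemma integrable_weight x : 0 <= x -> P.-integrable setT (EFin \o weight x).
Proof.
move=> x0; apply: integrable_normr_le1; first exact: measurable_weight.
by move=> t; rewrite gtr0_norm ?weight_gt0 // ltW ?weight_lt1.
Qed.

Lemma integrable_weightM x y : 0 <= x -> 0 <= y ->
  P.-integrable setT (EFin \o (fun t => weight x t * weight y t)).
Proof.
move=> x0 y0; apply: integrable_normr_le1.
  exact: measurable_funM (measurable_weight x) (measurable_weight y).
move=> t; rewrite normrM -[1]mulr1.
by apply: ler_pM => //; rewrite gtr0_norm ?weight_gt0 // ltW ?weight_lt1.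
Qed.

Lemma gfunE x : 0 <= x -> gfun P rho K x = 1 - Rintegral P setT (weight x).
Proof.
move=> x0; rewrite -[X in X - _](Rintegral_one P) -RintegralB //; first last.
- exact: integrable_weight.
- exact: integrable_one.
apply: eq_Rintegral => t _ /=; rewrite -/(weight x t) weightE //.
have a_gt0 := shift_gt0 x t x0; field; lra.
Qed.

Lemma gfunB x y : 0 <= x -> 0 <= y ->
  gfun P rho K x - gfun P rho K y = (x - y) * slope x y.
Proof.
move=> x0 y0; rewrite !gfunE // opprB addrC addrA subrK.
rewrite -RintegralB ?integrable_weight // -RintegralZl ?integrable_weightM //.
by apply: eq_Rintegral => t _; rewrite -opprB weightB // -mulNr opprB.
Qed.

Lemma slope_gt0 x y : 0 <= x -> 0 <= y -> 0 < slope x y.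
Proof.
move=> x0 y0; apply: Rintegral_gt0; first exact: integrable_weightM.
by move=> t; rewrite mulr_gt0 ?weight_gt0.
Qed.

Lemma slope_lt1 x y : 0 <= x -> 0 <= y -> slope x y < 1.
Proof.
move=> x0 y0; apply: Rintegral_lt1; first exact: integrable_weightM.
move=> t; rewrite -[1]mulr1.
by apply: ltr_pM => //; rewrite ?weight_lt1 // ltW ?weight_gt0.
Qed.

Lemma slope_le_slope0 x y : 0 <= x -> 0 <= y -> slope x y <= slope 0 y.
Proof.
move=> x0 y0; apply: le_Rintegral => //; try exact: integrable_weightM.
by move=> t _; rewrite ler_wpM2r ?weight_le_weight0 // ltW ?weight_gt0.
Qed.

Lemma gfun0_gt0 : 0 < gfun P rho K 0.
Proof.
rewrite gfunE // subr_gt0; apply: Rintegral_lt1; first exact: integrable_weight.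
by move=> t; exact: weight_lt1.
Qed.

Lemma gfun_lt1 x : 0 <= x -> gfun P rho K x < 1.
Proof.
move=> x0; rewrite gfunE // ltrBlDr ltrDl.
by apply: Rintegral_gt0 => [|t]; [exact: integrable_weight | exact: weight_gt0].
Qed.

End ShiftedReciprocal.

Theorem lemma7p2 (d : measure_display) (T : measurableType d) (R : realType)
  (P : probability T R) (rho : T -> R) (K : R)
  (rho_meas : measurable_fun setT rho)
  (rho_pos : forall t, 0 < rho t)
  (rho_mean : (\int[P]_t (rho t)%:E = 1%:E)%E)
  (K_pos : 0 < K) :
  exists M : R,
    [/\ 0 < M < 1,
        gfun P rho K M = M,
        (forall y : R, 0 <= y -> gfun P rho K y = y -> y = M) &
        let beta := 1 - gfun P rho K 0 / M in
        0 < beta < 1 /\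
        forall x : R, 0 <= x -> x != M ->
          0 <= (gfun P rho K x - M) / (x - M) <= beta].
Proof.
apply: (@secant_contraction R (gfun P rho K) (slope P rho K)).
- exact: gfunB.
- exact: slope_gt0.
- exact: slope_lt1.
- exact: slope_le_slope0.
- exact: gfun0_gt0.
- exact: gfun_lt1.
Qed.
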